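(* Let $\{x_k\}$, $\{d_k\}$ be generated by Algorithm 1 or Algorithm 2 (described in the context) under the Standing Assumption and Matrix Assumption of the context, and suppose the algorithm does not terminate finitely. Write $d_k=u_k+v_k$ with $u_k\in\mathrm{Null}(J_k)$, $v_k\in\mathrm{Range}(J_k^T)$. Then the sequence $\{u_k\}$ is bounded.
   Context: Notation: $g_k=\nabla f(x_k)$, $c_k=c(x_k)$, $J_k=\nabla c(x_k)^T$; $\phi(x,\tau)=\tau f(x)+\|c(x)\|_1$; $\Delta q(x,\tau,g,H,d)=-\tau(g^Td+\frac12\max\{d^THd,0\})+\|c(x)\|_1$. Matrix Assumption: symmetric $H_k$ with $\|H_k\|_2\le\kappa_H$ and $u^TH_ku\ge\zeta\|u\|_2^2$ whenever $J_ku=0$. Common iteration: $(d_k,y_k)$ solves $H_kd_k+J_k^Ty_k=-g_k$, $J_kd_k=-c_k$; stop if $g_k+J_k^Ty_k=0$ and $c_k=0$. $\tau_k^{trial}=\infty$ if $g_k^Td_k+\max\{d_k^TH_kd_k,0\}\le0$, else $\frac{(1-\sigma)\|c_k\|_1}{g_k^Td_k+\max\{d_k^TH_kd_k,0\}}$; $\tau_k=\tau_{k-1}$ if $\tau_{k-1}\le\tau_k^{trial}$, else $(1-\epsilon)\tau_k^{trial}$; $x_{k+1}=x_k+\alpha_kd_k$. (SD) for trial $\alpha$: $\phi(x_k+\alpha d_k,\tau_k)\le\phi(x_k,\tau_k)-\eta\alpha\Delta q(x_k,\tau_k,g_k,H_k,d_k)$. Algorithm 1 (inputs $\tau_{-1}>0$,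 $\epsilon,\sigma,\eta\in(0,1)$, $\rho>1$, $L_{-1}>0$, $\gamma_{-1,i}>0$): choose $L_{k,0}\in(0,L_{k-1}]$, $\gamma_{k,i,0}\in(0,\gamma_{k-1,i}]$; for $j=0,1,\dots$ with $\Lambda_{k,j}=\tau_kL_{k,j}+\sum_i\gamma_{k,i,j}$: $\widehat\alpha_{k,j}=\frac{2(1-\eta)\Delta q(x_k,\tau_k,g_k,H_k,d_k)}{\Lambda_{k,j}\|d_k\|_2^2}$, $\widetilde\alpha_{k,j}=\widehat\alpha_{k,j}-\frac{4\|c_k\|_1}{\Lambda_{k,j}\|d_k\|_2^2}$; $\alpha_{k,j}=\widehat\alpha_{k,j}$ if $\widehat\alpha_{k,j}<1$, $1$ if $\widetilde\alpha_{k,j}\le1\le\widehat\alpha_{k,j}$, $\widetilde\alpha_{k,j}$ if $\widetilde\alpha_{k,j}>1$; accept ($\alpha_k=\alpha_{k,j}$, $L_k=L_{k,j}$, $\gamma_{k,i}=\gamma_{k,i,j}$) if (SD) holds or if both $f(x_k+\alpha_{k,j}d_k)\le f(x_k)+\alpha_{k,j}g_k^Td_k+\frac12L_{k,j}\alpha_{k,j}^2\|d_k\|_2^2$ (LF) and $|c_i(x_k+\alpha_{k,j}d_k)|\le|c_i(x_k)+\alpha_{k,j}\nabla c_i(x_k)^Td_k|+\frac12\gamma_{k,i,j}\alpha_{k,j}^2\|d_k\|_2^2$ (LC$_i$) for all $i$; otherwise multiply $L_{k,j}$ by $\rho$ if (LF) fails and $\gamma_{k,i,j}$ by $\rho$ if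 (LC$_i$) fails. Algorithm 2 (inputs $\tau_{-1}>0$, $\epsilon,\sigma,\eta,\nu\in(0,1)$, $\alpha>0$): $\alpha_k=\nu^j\alpha$ for the smallest $j\ge0$ such that (SD) holds. Standing Assumption: an open convex set $\mathcal X$ contains all iterates and trial points $x_k+\alpha_{k,j}d_k$; $f$ is $C^1$, bounded below on $\mathcal X$, $\nabla f$ bounded and $L$-Lipschitz on $\mathcal X$; $c$, $\nabla c^T$ bounded on $\mathcal X$; $\nabla c_i$ is $\gamma_i$-Lipschitz on $\mathcal X$; singular values of $\nabla c(x)^T$ bounded away from zero uniformly over $\mathcal X$. *)

From HB Require Import structures.
From mathcomp Require Import all_boot all_order all_algebra.
From mathcomp Require Import reals.
Set Implicit Arguments. Unset Strict Implicit. Unset Printing Implicit Defensive.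
Import Order.TTheory GRing.Theory Num.Theory.
Local Open Scope ring_scope.

Definition dotv {R : realType} {n : nat} (u v : 'cV[R]_n) : R :=
  \sum_(i < n) u i 0 * v i 0.

Definition norm2 {R : realType} {n : nat} (v : 'cV[R]_n) : R :=
  Num.sqrt (dotv v v).

Definition norm1 {R : realType} {n : nat} (v : 'cV[R]_n) : R :=
  \sum_(i < n) `|v i 0|.

Definition opnorm2_le {R : realType} {p q : nat} (A : 'M[R]_(p, q)) (k : R) :=
  forall u : 'cV[R]_q, norm2 (A *m u) <= k * norm2 u.

Definition open_set {R : realType} {n : nat} (X : 'cV[R]_n -> Prop) :=
  forall x, X x -> exists r, 0 < r /\ forall z, norm2 (z - x) < r -> X z.

Definition convex_set {R : realType} {n : nat} (X : 'cV[R]_n -> Prop) :=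
  forall x z (t : R), X x -> X z -> 0 <= t <= 1 -> X ((1 - t) *: x + t *: z).

Definition gradient_on {R : realType} {n : nat} (X : 'cV[R]_n -> Prop)
  (f : 'cV[R]_n -> R) (g : 'cV[R]_n -> 'cV[R]_n) :=
  forall x, X x -> forall e : R, 0 < e -> exists del : R, 0 < del /\
    forall h, norm2 h < del -> `|f (x + h) - f x - dotv (g x) h| <= e * norm2 h.

Definition continuous_on {R : realType} {n p : nat} (X : 'cV[R]_n -> Prop)
  (F : 'cV[R]_n -> 'cV[R]_p) :=
  forall x, X x -> forall e : R, 0 < e -> exists del : R, 0 < del /\
    forall z, X z -> norm2 (z - x) < del -> norm2 (F z - F x) < e.

Definition lipschitz_on {R : realType} {n p : nat} (X : 'cV[R]_n -> Prop)
  (F : 'cV[R]_n -> 'cV[R]_p) (L : R) :=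
  forall x z, X x -> X z -> norm2 (F x - F z) <= L * norm2 (x - z).

(* Standing Assumption. Jc x is the Jacobian J(x) = nabla c(x)^T (m x n);
   its i-th row (transposed) is nabla c_i(x). *)
Definition standing_assumption {R : realType} {n m : nat}
  (X : 'cV[R]_n -> Prop) (f : 'cV[R]_n -> R) (gf : 'cV[R]_n -> 'cV[R]_n)
  (c : 'cV[R]_n -> 'cV[R]_m) (Jc : 'cV[R]_n -> 'M[R]_(m, n))
  (L : R) (gam : 'I_m -> R) :=
  [/\ open_set X /\ convex_set X,
      gradient_on X f gf /\ continuous_on X gf,
      (exists B, forall x, X x -> B <= f x) /\
      (exists B, forall x, X x -> norm2 (gf x) <= B) /\ lipschitz_on X gf L,
      (forall i : 'I_m, gradient_on X (fun x => c x i 0) (fun x => (row i (Jc x))^T) /\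
                        lipschitz_on X (fun x => (row i (Jc x))^T) (gam i)) /\
      ((exists B, forall x, X x -> norm2 (c x) <= B) /\
       (exists B, forall x, X x -> opnorm2_le (Jc x) B))
    & (* singular values of nabla c(x)^T bounded away from zero uniformly *)
      exists s : R, 0 < s /\ forall x, X x -> forall w : 'cV[R]_m,
        s * norm2 w <= norm2 ((Jc x)^T *m w)].

Definition matrix_assumption {R : realType} {n m : nat}
  (H : 'M[R]_n) (J : 'M[R]_(m, n)) (kH zeta : R) :=
  [/\ H^T = H, opnorm2_le H kH &
      forall u : 'cV[R]_n, J *m u = 0 -> zeta * norm2 u ^+ 2 <= dotv u (H *m u)].

Definition phi {R : realType} {n m : nat} (f : 'cV[R]_n -> R)
  (c : 'cV[R]_n -> 'cV[R]_m) (x : 'cV[R]_n) (tau : R) : R :=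
  tau * f x + norm1 (c x).

Definition dq {R : realType} {n m : nat} (c : 'cV[R]_n -> 'cV[R]_m)
  (x : 'cV[R]_n) (tau : R) (g : 'cV[R]_n) (H : 'M[R]_n) (d : 'cV[R]_n) : R :=
  - tau * (dotv g d + 2^-1 * Num.max (dotv d (H *m d)) 0) + norm1 (c x).

Definition SD {R : realType} {n m : nat} (f : 'cV[R]_n -> R)
  (c : 'cV[R]_n -> 'cV[R]_m) (x : 'cV[R]_n) (tau : R) (g : 'cV[R]_n)
  (H : 'M[R]_n) (d : 'cV[R]_n) (eta a : R) : Prop :=
  phi f c (x + a *: d) tau <= phi f c x tau - eta * a * dq c x tau g H d.

(* tau_trial ; None encodes +infinity *)
Definition tau_trial {R : realType} {n m : nat} (sigma : R) (cx : 'cV[R]_m)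
  (g : 'cV[R]_n) (H : 'M[R]_n) (d : 'cV[R]_n) : option R :=
  let den := dotv g d + Num.max (dotv d (H *m d)) 0 in
  if den <= 0 then None else Some ((1 - sigma) * norm1 cx / den).

Definition tau_update {R : realType} (tprev : R) (ttrial : option R) (eps : R) : R :=
  match ttrial with
  | None => tprev
  | Some t => if tprev <= t then tprev else (1 - eps) * t
  end.

Definition alpha1 {R : realType} (eta dqv Lam c1 dd : R) : R :=
  let ah := 2 * (1 - eta) * dqv / (Lam * dd) in
  let atl := ah - 4 * c1 / (Lam * dd) in
  if ah < 1 then ah else if atl <= 1 then 1 else atl.

Definition LF {R : realType} {n : nat} (f : 'cV[R]_n -> R) (g x d : 'cV[R]_n)
  (a Lv : R) : Prop :=
  f (x + a *: d) <= f x + a * dotv g d + 2^-1 * Lv * a ^+ 2 * norm2 d ^+ 2.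

Definition LC {R : realType} {n m : nat} (c : 'cV[R]_n -> 'cV[R]_m)
  (J : 'M[R]_(m, n)) (x d : 'cV[R]_n) (i : 'I_m) (a gv : R) : Prop :=
  `|c (x + a *: d) i 0| <= `|c x i 0 + a * dotv (row i J)^T d|
                            + 2^-1 * gv * a ^+ 2 * norm2 d ^+ 2.

Definition common_iteration {R : realType} {n m : nat}
  (X : 'cV[R]_n -> Prop) (gf : 'cV[R]_n -> 'cV[R]_n)
  (c : 'cV[R]_n -> 'cV[R]_m) (Jc : 'cV[R]_n -> 'M[R]_(m, n))
  (tau_init eps sigma : R)
  (x d : nat -> 'cV[R]_n) (y : nat -> 'cV[R]_m) (H : nat -> 'M[R]_n)
  (tau alpha : nat -> R) : Prop :=
  forall k : nat,
    [/\ X (x k),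
        H k *m d k + (Jc (x k))^T *m y k = - gf (x k)
        /\ Jc (x k) *m d k = - c (x k),
        (* no finite termination *)
        ~ (gf (x k) + (Jc (x k))^T *m y k = 0 /\ c (x k) = 0),
        tau k = tau_update (if k is k'.+1 then tau k' else tau_init)
                  (tau_trial sigma (c (x k)) (gf (x k)) (H k) (d k)) eps
      & x k.+1 = x k + alpha k *: d k].

Definition algorithm1_steps {R : realType} {n m : nat}
  (X : 'cV[R]_n -> Prop) (f : 'cV[R]_n -> R) (gf : 'cV[R]_n -> 'cV[R]_n)
  (c : 'cV[R]_n -> 'cV[R]_m) (Jc : 'cV[R]_n -> 'M[R]_(m, n))
  (eta rho L_init : R) (gam_init : 'I_m -> R)
  (x d : nat -> 'cV[R]_n) (H : nat -> 'M[R]_n) (tau alpha : nat -> R) : Prop :=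
  exists (Lkj : nat -> nat -> R) (gkj : nat -> 'I_m -> nat -> R) (jk : nat -> nat),
    let akj k j :=
      alpha1 eta (dq c (x k) (tau k) (gf (x k)) (H k) (d k))
             (tau k * Lkj k j + \sum_(i < m) gkj k i j)
             (norm1 (c (x k))) (norm2 (d k) ^+ 2) in
    let accept k j :=
      SD f c (x k) (tau k) (gf (x k)) (H k) (d k) eta (akj k j)
      \/ (LF f (gf (x k)) (x k) (d k) (akj k j) (Lkj k j) /\
          forall i, LC c (Jc (x k)) (x k) (d k) i (akj k j) (gkj k i j)) in
    [/\ forall k, 0 < Lkj k 0 <= (if k is k'.+1 then Lkj k' (jk k') else L_init),
        forall k i, 0 < gkj k i 0 <= (if k is k'.+1 then gkj k' i (jk k') else gam_init i),
        forall k j, (j <= jk k)%N -> X (x k + akj k j *: d k),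
        forall k j, (j < jk k)%N ->
          [/\ ~ accept k j,
              (LF f (gf (x k)) (x k) (d k) (akj k j) (Lkj k j) ->
                 Lkj k j.+1 = Lkj k j) /\
              (~ LF f (gf (x k)) (x k) (d k) (akj k j) (Lkj k j) ->
                 Lkj k j.+1 = rho * Lkj k j)
            & forall i,
              (LC c (Jc (x k)) (x k) (d k) i (akj k j) (gkj k i j) ->
                 gkj k i j.+1 = gkj k i j) /\
              (~ LC c (Jc (x k)) (x k) (d k) i (akj k j) (gkj k i j) ->
                 gkj k i j.+1 = rho * gkj k i j)]
      & forall k, accept k (jk k) /\ alpha k = akj k (jk k)].

Definition algorithm2_steps {R : realType} {n m : nat}
  (f : 'cV[R]_n -> R) (gf : 'cV[R]_n -> 'cV[R]_n) (c : 'cV[R]_n -> 'cV[R]_m)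
  (eta nu abar : R)
  (x d : nat -> 'cV[R]_n) (H : nat -> 'M[R]_n) (tau alpha : nat -> R) : Prop :=
  forall k, exists j : nat,
    [/\ alpha k = nu ^+ j * abar,
        SD f c (x k) (tau k) (gf (x k)) (H k) (d k) eta (nu ^+ j * abar)
      & forall j', (j' < j)%N ->
          ~ SD f c (x k) (tau k) (gf (x k)) (H k) (d k) eta (nu ^+ j' * abar)].

(* The two block rows of the Newton system control the two components of
   d = u + v separately.  The constraint row J v = J d = -c, together with the
   lower bound s on the singular values of J^T and v = J^T w, gives
   s^2 |v|^2 <= |c|^2.  Multiplying the optimality row by u in Null(J) kills
   J^T y, so the curvature of H on Null(J) yields zeta |u| <= |g + H v|.
   Uniform bounds on g, c and H then bound u. *)
From HB Require Import structures.
From mathcomp Require Import all_boot all_order all_algebra.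
From mathcomp Require Import reals.
From mathcomp Require Import lra.
Import Order.TTheory GRing.Theory Num.Theory.
Local Open Scope ring_scope.

Section DotProduct.
Context {R : realType} {n : nat}.
Implicit Types a b z : 'cV[R]_n.

Lemma dotvE a b : dotv a b = (a^T *m b) 0 0.
Proof. by rewrite /dotv mxE; apply: eq_bigr => i _; rewrite mxE. Qed.

Lemma dotvC a b : dotv a b = dotv b a.
Proof. by apply: eq_bigr => i _; rewrite mulrC. Qed.

Lemma dotvDl a b z : dotv (a + b) z = dotv a z + dotv b z.
Proof. by rewrite /dotv -big_split; apply: eq_bigr => i _; rewrite mxE mulrDl. Qed.

Lemma dotvDr a b z : dotv z (a + b) = dotv z a + dotv z b.
Proof. by rewrite dotvC dotvDl !(dotvC z). Qed.

Lemma dotvZl t a b : dotv (t *: a) b = t * dotv a b.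
Proof. by rewrite /dotv mulr_sumr; apply: eq_bigr => i _; rewrite mxE mulrA. Qed.

Lemma dotvZr t a b : dotv b (t *: a) = t * dotv b a.
Proof. by rewrite dotvC dotvZl dotvC. Qed.

Lemma dotvNl a b : dotv (- a) b = - dotv a b.
Proof. by rewrite -scaleN1r dotvZl mulN1r. Qed.

Lemma dotvNr a b : dotv b (- a) = - dotv b a.
Proof. by rewrite dotvC dotvNl dotvC. Qed.

Lemma dotv0r a : dotv a 0 = 0.
Proof. by rewrite /dotv big1 // => i _; rewrite mxE mulr0. Qed.

Lemma dotvv_ge0 a : 0 <= dotv a a.
Proof. by apply: sumr_ge0 => i _; rewrite -expr2 sqr_ge0. Qed.

Lemma norm2_ge0 a : 0 <= norm2 a.
Proof. exact: sqrtr_ge0. Qed.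

Lemma norm2_sqr a : norm2 a ^+ 2 = dotv a a.
Proof. by rewrite sqr_sqrtr // dotvv_ge0. Qed.

Lemma dotv_young t a b : 2 * t * dotv a b <= t ^+ 2 * dotv a a + dotv b b.
Proof.
have := dotvv_ge0 (t *: a - b).
rewrite !(dotvDl, dotvDr, dotvZl, dotvZr, dotvNl, dotvNr) (dotvC b a); nra.
Qed.

Lemma dotvvD_le a b : dotv (a + b) (a + b) <= 2 * dotv a a + 2 * dotv b b.
Proof.
have := dotvv_ge0 (a - b).
rewrite !(dotvDl, dotvDr, dotvNl, dotvNr) (dotvC b a); lra.
Qed.

Lemma dotvv_le_sqr {a} {k : R} : norm2 a <= k -> dotv a a <= k ^+ 2.
Proof.
move=> le_ak; rewrite -norm2_sqr lerXn2r // nnegrE ?norm2_ge0 //.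
exact: le_trans (norm2_ge0 _) le_ak.
Qed.

Lemma sqr_le_dotvv {a} {k : R} : 0 <= k -> k <= norm2 a -> k ^+ 2 <= dotv a a.
Proof. by move=> k_ge0 le_ka; rewrite -norm2_sqr lerXn2r // nnegrE norm2_ge0. Qed.

Lemma dotvv_le_scale {a b} {k : R} :
  0 <= k -> norm2 a <= k * norm2 b -> dotv a a <= k ^+ 2 * dotv b b.
Proof. by move=> k_ge0 /dotvv_le_sqr; rewrite exprMn norm2_sqr. Qed.

End DotProduct.

Lemma dotv_trmx (R : realType) (n m : nat) (A : 'M[R]_(m, n)) w v :
  dotv (A^T *m w) v = dotv w (A *m v).
Proof. by rewrite !dotvE trmx_mul trmxK mulmxA. Qed.

Section NewtonStepSplitting.
Context {R : realType} {n m : nat}.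
Context {J : 'M[R]_(m, n)} {H : 'M[R]_n} {g d u v : 'cV[R]_n} {c y : 'cV[R]_m}.
Hypothesis newton_opt : H *m d + J^T *m y = - g.
Hypothesis newton_feas : J *m d = - c.
Hypothesis d_split : d = u + v.
Hypothesis u_null : J *m u = 0.

Lemma range_component_sqr_le {w : 'cV[R]_m} {s : R} :
  v = J^T *m w -> 0 <= s -> s * norm2 w <= norm2 (J^T *m w) ->
  s ^+ 2 * dotv v v <= dotv c c.
Proof.
move=> v_range s_ge0 sv_le.
have Jv : J *m v = - c by rewrite -newton_feas d_split mulmxDr u_null add0r.
have vv : dotv v v = - dotv w c by rewrite {1}v_range dotv_trmx Jv dotvNr.
have sw : s ^+ 2 * dotv w w <= dotv v v.
  have := sqr_le_dotvv (mulr_ge0 s_ge0 (norm2_ge0 w)) sv_le.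
  by rewrite exprMn norm2_sqr -v_range.
have := dotv_young (s ^+ 2) w (- c).
rewrite dotvNr dotvNl dotvNr opprK -vv.
have := dotvv_ge0 w; have := dotvv_ge0 v; have := sqr_ge0 s; nra.
Qed.

Lemma null_component_sqr_le {zeta : R} :
  0 <= zeta -> (forall z, J *m z = 0 -> zeta * norm2 z ^+ 2 <= dotv z (H *m z)) ->
  zeta ^+ 2 * dotv u u <= dotv (g + H *m v) (g + H *m v).
Proof.
move=> zeta_ge0 curv.
have uJy : dotv u (J^T *m y) = 0 by rewrite dotvC dotv_trmx u_null dotv0r.
have uHu : dotv u (H *m u) = - dotv u (g + H *m v).
  have := congr1 (dotv u) newton_opt.
  rewrite d_split mulmxDr !(dotvDr, dotvNr) uJy; lra.
have := curv u u_null; rewrite norm2_sqr uHu => zuu.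
have := dotv_young zeta u (- (g + H *m v)).
rewrite dotvNl !dotvNr opprK.
have := ler_wpM2l (mulr_ge0 (ler0n _ 2) zeta_ge0) zuu.
rewrite expr2; lra.
Qed.

End NewtonStepSplitting.

Theorem lemma2p15 (R : realType) (n m : nat)
  (X : 'cV[R]_n -> Prop) (f : 'cV[R]_n -> R) (gf : 'cV[R]_n -> 'cV[R]_n)
  (c : 'cV[R]_n -> 'cV[R]_m) (Jc : 'cV[R]_n -> 'M[R]_(m, n))
  (L : R) (gam : 'I_m -> R) (kH zeta : R)
  (tau_init eps sigma eta : R)
  (x d : nat -> 'cV[R]_n) (y : nat -> 'cV[R]_m) (H : nat -> 'M[R]_n)
  (tau alpha : nat -> R) :
  standing_assumption X f gf c Jc L gam ->
  0 < kH -> 0 < zeta ->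
  (forall k, matrix_assumption (H k) (Jc (x k)) kH zeta) ->
  0 < tau_init -> 0 < eps < 1 -> 0 < sigma < 1 -> 0 < eta < 1 ->
  common_iteration X gf c Jc tau_init eps sigma x d y H tau alpha ->
  ((exists (rho L_init : R) (gam_init : 'I_m -> R),
      [/\ 1 < rho, 0 < L_init, (forall i, 0 < gam_init i) &
          algorithm1_steps X f gf c Jc eta rho L_init gam_init x d H tau alpha])
   \/
   (exists nu abar : R,
      [/\ 0 < nu < 1, 0 < abar &
          algorithm2_steps f gf c eta nu abar x d H tau alpha])) ->
  forall u v : nat -> 'cV[R]_n,
    (forall k, d k = u k + v k) ->
    (forall k, Jc (x k) *m u k = 0) ->
    (forall k, exists w : 'cV[R]_m, v k = (Jc (x k))^T *m w) ->
  exists B : R, forall k, norm2 (u k) <= B.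
Proof.
move=> [_ _ [_ [[Bg gf_bnd] _]] [_ [[Bc c_bnd] _]] [s [s_gt0 sv_bnd]]].
move=> kH_gt0 zeta_gt0 mxH _ _ _ _ iter _ u v d_split u_null v_range.
exists (Num.sqrt ((2 * Bg ^+ 2 + 2 * kH ^+ 2 * (Bc ^+ 2 / s ^+ 2)) / zeta ^+ 2)).
move=> k; rewrite ler_wsqrtr // ler_pdivlMr ?exprn_gt0 // mulrC.
have [Xk [opt feas] _ _ _] := iter k; have [_ H_bnd curv] := mxH k.
have [w v_w] := v_range k.
have vv : dotv (v k) (v k) <= Bc ^+ 2 / s ^+ 2.
  rewrite ler_pdivlMr ?exprn_gt0 // mulrC.
  apply: le_trans (dotvv_le_sqr (c_bnd _ Xk)).
  exact: (range_component_sqr_le feas (d_split k) (u_null k) v_w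
            (ltW s_gt0) (sv_bnd _ Xk w)).
have Hv : dotv (H k *m v k) (H k *m v k) <= kH ^+ 2 * dotv (v k) (v k).
  exact: dotvv_le_scale (ltW kH_gt0) (H_bnd _).
have gg := dotvv_le_sqr (gf_bnd _ Xk).
have uu := null_component_sqr_le opt (d_split k) (u_null k) (ltW zeta_gt0) curv.
have := dotvvD_le (gf (x k)) (H k *m v k).
have := ler_wpM2l (sqr_ge0 kH) vv; lra.
Qed.
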